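(* Let $u\in(0,1]$, $w\in[0,1]$, $R>1$, and let $f:(0,\infty)\to[0,\infty)$, $N\mapsto f_N$, be a non-increasing function. For $x_C,x_D\geqslant 0$ with $x_C+x_D>0$ put $\pi_C(x_C,x_D)=R\frac{x_C}{x_C+x_D}-1$ and $\pi_D(x_C,x_D)=R\frac{x_C}{x_C+x_D}$, and consider the system $$x_C=\Big[\big(1-\tfrac{u}{2}\big)x_C\big(1+w\pi_C(x_C,x_D)\big)+\tfrac{u}{2}\,x_D\big(1+w\pi_D(x_C,x_D)\big)\Big]f_{x_C+x_D},$$ $$x_D=\Big[\tfrac{u}{2}\,x_C\big(1+w\pi_C(x_C,x_D)\big)+\big(1-\tfrac{u}{2}\big)x_D\big(1+w\pi_D(x_C,x_D)\big)\Big]f_{x_C+x_D}.$$ Then there exists $p\in(0,1)$ such that every solution $(x_C,x_D)$ of this system with $x_C,x_D\geqslant 0$ and $x_C+x_D>0$ satisfies $\frac{x_C}{x_C+x_D}=p$. That is, the fraction of cooperators is the same in every non-zero solution.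
   Context: The setting is a population of cooperators and defectors. $x_C$ and $x_D$ denote the expected numbers of cooperators and defectors, and the system above is the fixed-point (''metastable equilibrium'') condition for the expected next-generation counts. Here $u$ is the mutation rate: an offspring switches to the other strategy with probability $u/2$. $w$ is the cost of cooperation, $R$ is the multiplication factor of a public goods game, and $f_N$ is the baseline reproductive capacity at population size $N$. *)

From Stdlib Require Import Reals.
Open Scope R_scope.

Definition piC (Rm xC xD : R) : R := Rm * (xC / (xC + xD)) - 1.
Definition piD (Rm xC xD : R) : R := Rm * (xC / (xC + xD)).

Definition is_solution (u w Rm : R) (f : R -> R) (xC xD : R) : Prop :=
  xC = ((1 - u/2) * xC * (1 + w * piC Rm xC xD)
        + (u/2) * xD * (1 + w * piD Rm xC xD)) * f (xC + xD) /\
  xD = ((u/2) * xC * (1 + w * piC Rm xC xD)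
        + (1 - u/2) * xD * (1 + w * piD Rm xC xD)) * f (xC + xD).

(* Dividing the two equations of the system eliminates the baseline capacity
   [f (xC + xD)] (which cannot vanish at a non-zero solution), and writing
   [xC = p N], [xD = (1 - p) N] turns the quotient into a quadratic equation
   [Q p = 0] in the cooperator share [p] alone.  Since [Q 0 = -u/2 < 0] and
   [Q 1 = u/2 (1 + w (R - 1)) > 0], [Q] has a root in [(0, 1)] by the
   intermediate value theorem, and by Vieta's formulas it has at most one root
   in [[0, 1]]. *)
From Stdlib Require Import Reals Lra.
Open Scope R_scope.

(* Two distinct roots would give [C = A p q] and [A + B + C = A (1 - p) (1 - q)],
   which forces [A < 0] from the first equation and [A > 0] from the second. *)
Lemma quadratic_root_unique_unit_interval (A B C p q : R) :
  C < 0 -> 0 < A + B + C -> 0 <= p <= 1 -> 0 <= q <= 1 ->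
  A * p ^ 2 + B * p + C = 0 -> A * q ^ 2 + B * q + C = 0 -> p = q.
Proof.
  intros hC hABC hp hq rootp rootq.
  destruct (Req_dec p q) as [e | hpq]; [exact e | exfalso].
  assert (sum_roots : A * (p + q) + B = 0).
  { apply (Rmult_eq_reg_l (p - q)); [| lra].
    transitivity ((A * p ^ 2 + B * p + C) - (A * q ^ 2 + B * q + C)); [ring |].
    rewrite rootp, rootq; ring. }
  assert (prod_roots : C = A * (p * q)) by nra.
  assert (at_one : A + B + C = A * ((1 - p) * (1 - q))) by nra.
  assert (hpq0 : 0 <= p * q) by (apply Rmult_le_pos; lra).
  assert (hpq1 : 0 <= (1 - p) * (1 - q)) by (apply Rmult_le_pos; lra).
  destruct (Rlt_or_le A 0) as [hA | hA]; nra.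
Qed.

Lemma quadratic_root_in_unit_interval (A B C : R) :
  C < 0 -> 0 < A + B + C ->
  exists p, 0 < p < 1 /\ A * p ^ 2 + B * p + C = 0.
Proof.
  intros hC hABC.
  set (Q := fun x => A * x ^ 2 + B * x + C).
  assert (hQ : continuity Q) by (unfold Q; reg).
  assert (hQ0 : Q 0 < 0) by (unfold Q; simpl; lra).
  assert (hQ1 : 0 < Q 1) by (unfold Q; simpl; lra).
  destruct (IVT Q 0 1 hQ ltac:(lra) hQ0 hQ1) as [p [hp root]].
  exists p; split; [| exact root].
  destruct (Req_dec p 0) as [e | ?]; [rewrite e in root; lra |].
  destruct (Req_dec p 1) as [e | ?]; [rewrite e in root; lra |].
  lra.
Qed.

(* [xC * (second bracket) - xD * (first bracket) = (xC + xD)^2 * share_poly p]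
   for [p = xC / (xC + xD)]. *)
Definition share_poly (u w Rm x : R) : R :=
  w * (u * Rm - 1) * x ^ 2 + (u + w - u * w * (Rm + 1) / 2) * x - u / 2.

Lemma share_poly_root (u w Rm : R) (f : R -> R) (xC xD : R) :
  0 < xC + xD -> is_solution u w Rm f xC xD ->
  share_poly u w Rm (xC / (xC + xD)) = 0.
Proof.
  intros hN [eqC eqD]; unfold piC, piD in eqC, eqD.
  set (p := xC / (xC + xD)) in *.
  assert (hxC : xC = p * (xC + xD)) by (unfold p; field; lra).
  assert (hxD : xD = (1 - p) * (xC + xD)) by (unfold p; field; lra).
  set (N := xC + xD) in *; set (F := f N) in *; clearbody p N F.
  assert (hF : F <> 0) by (intro e; rewrite e in eqC, eqD; lra).
  assert (cross : F * N ^ 2 * share_poly u w Rm p = 0).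
  { transitivity (xC * xD - xD * xC); [| ring].
    rewrite eqC at 2; rewrite eqD at 1; rewrite hxC, hxD.
    unfold share_poly; field. }
  destruct (Rmult_integral _ _ cross) as [h | h]; [| exact h].
  destruct (Rmult_integral _ _ h); [contradiction |].
  exfalso; apply (pow_nonzero N 2); lra.
Qed.

Lemma share_unit_interval (xC xD : R) :
  0 <= xC -> 0 <= xD -> 0 < xC + xD -> 0 <= xC / (xC + xD) <= 1.
Proof.
  intros hC hD hN.
  assert (e : xC / (xC + xD) * (xC + xD) = xC) by (field; lra).
  set (p := xC / (xC + xD)) in *; split; nra.
Qed.

Theorem mainTheorem1 (u w Rm : R) (f : R -> R)
  (hu : 0 < u <= 1) (hw : 0 <= w <= 1) (hR : 1 < Rm)
  (hf_nonneg : forall N, 0 < N -> 0 <= f N)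
  (hf_noninc : forall N M, 0 < N -> N <= M -> f M <= f N) :
  exists p, 0 < p < 1 /\
    forall xC xD, 0 <= xC -> 0 <= xD -> 0 < xC + xD ->
      is_solution u w Rm f xC xD -> xC / (xC + xD) = p.
Proof.
  set (A := w * (u * Rm - 1)); set (B := u + w - u * w * (Rm + 1) / 2);
    set (C := - (u / 2)).
  assert (hC : C < 0) by (unfold C; lra).
  assert (hABC : 0 < A + B + C).
  { replace (A + B + C) with (u / 2 * (1 + w * (Rm - 1))) by (unfold A, B, C; field).
    assert (0 <= w * (Rm - 1)) by (apply Rmult_le_pos; lra).
    apply Rmult_lt_0_compat; lra. }
  destruct (quadratic_root_in_unit_interval A B C hC hABC) as [p [hp rootp]].
  exists p; split; [exact hp |].
  intros xC xD hxC hxD hN sol.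
  apply (quadratic_root_unique_unit_interval A B C _ _ hC hABC);
    [apply share_unit_interval; assumption | lra | | exact rootp].
  rewrite <- (share_poly_root u w Rm f xC xD hN sol).
  unfold share_poly, A, B, C; ring.
Qed.
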